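(* Let $\odot$ be a pseudo-multiplication on $[0,\infty]$ with left identity $1_{\odot}$. Then $\odot$ is non-degenerate (i.e. $O(1_{\odot})=0$) if and only if the monoid $([0,1_{\odot}],\odot)$ is commutative.
   Context: A pseudo-multiplication is a binary operation $\odot:[0,\infty]\times[0,\infty]\to[0,\infty]$ such that: $\odot$ is associative; $\odot$ is continuous on $(0,\infty)\times[0,\infty]$; for every $t$, the map $s\mapsto s\odot t$ is continuous on $(0,\infty]$; $\odot$ is nondecreasing in each argument; there is a left identity element $1_{\odot}$, i.e. $1_{\odot}\odot t=t$ for all $t$; there are no zero divisors, i.e. $s\odot t=0$ implies $s=0$ or $t=0$; and $0$ is an annihilator, i.e. $0\odot t=t\odot 0=0$ for all $t$. For $t\in[0,\infty]$ put $O(t)=\inf_{s>0} s\odot t$. The pseudo-multiplication $\odot$ is called non-degenerate if $O(1_{\odot})=0$. *)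

(* [0,oo] is modelled as the nonnegative part of
   the extended reals \bar R over an arbitrary R : realType. *)
From HB Require Import structures.
From mathcomp Require Import all_boot all_order all_algebra.
From mathcomp Require Import all_classical all_reals all_analysis.
Set Implicit Arguments. Unset Strict Implicit. Unset Printing Implicit Defensive.
Import Order.TTheory GRing.Theory Num.Theory.
Local Open Scope classical_set_scope.
Local Open Scope ereal_scope.

Definition nonneg_ext (R : realType) : set (\bar R) := [set x | 0 <= x].

(* pseudo-multiplication on [0,oo] with left identity e;
   only the values of op on [0,oo] x [0,oo] matter. *)
Definition pseudo_mult (R : realType) (op : \bar R -> \bar R -> \bar R)
    (e : \bar R) : Prop :=
  (
      (forall s t, 0 <= s -> 0 <= t -> 0 <= op s t) /\
      (forall r s t, 0 <= r -> 0 <= s -> 0 <= t -> op (op r s) t = op r (op s t)) /\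
      {within [set p : \bar R * \bar R | (0 < p.1 < +oo) /\ 0 <= p.2],
         continuous (fun p => op p.1 p.2)} /\
      (forall t, 0 <= t ->
         {within [set s : \bar R | 0 < s], continuous (fun s => op s t)}) /\
      (forall s s' t, 0 <= s -> s <= s' -> 0 <= t -> op s t <= op s' t) /\
      (forall s t t', 0 <= s -> 0 <= t -> t <= t' -> op s t <= op s t') /\
      (0 <= e /\ forall t, 0 <= t -> op e t = t) /\
      (forall s t, 0 <= s -> 0 <= t -> op s t = 0 -> s = 0 \/ t = 0) /\
      (forall t, 0 <= t -> op 0 t = 0 /\ op t 0 = 0)).

Definition O_inf (R : realType) (op : \bar R -> \bar R -> \bar R) (t : \bar R)
  : \bar R := ereal_inf [set op s t | s in [set s : \bar R | 0 < s]].

Definition non_degenerate (R : realType) (op : \bar R -> \bar R -> \bar R)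
    (e : \bar R) : Prop := O_inf op e = 0.

(* Non-degeneracy says that [op s e] tends to [0] as [s] decreases to [0].  Since
   [s |-> op s e] is continuous and nondecreasing on (0, oo], the intermediate
   value theorem writes every [y] in [0, e] as [op s e], so that
   [op y e = op s (op e e) = y]: [e] is a two-sided identity on [0, e].  Conversely,
   commutativity gives [op s e = s], hence [O(e) = 0].

   On [0, e] the operation is then monotone and preserves nonempty sups and infs
   in each argument, so every [x] has [(n+1)]-st roots and every idempotent [p]
   acts as [u |-> min u p] from both sides.  Let [x <= y] with [op x y <> op y x].
   The centralizer of [x] is closed under sups and infs, so [y] lies in a gap
   [(g, h)] of it.  Let [c] be the sup of chosen roots [w_n] of [x] and [q] the
   inf of the powers of [c]; [q] is idempotent and [x <= q].  Elements on
   opposite sides of an idempotent commute, so [y < q] and thus [h <= q <= c].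
   Then [g < h = op h q <= op h c], hence [g < op h w_n] for some [n]; all powers
   of [w_n] commute with [x], so each of them is [>= h], in particular
   [x = w_n^(n+1) >= h > y]. *)

From HB Require Import structures.
From mathcomp Require Import all_boot all_order all_algebra.
From mathcomp Require Import all_classical all_reals all_analysis.
Import Order.TTheory GRing.Theory Num.Theory.
Local Open Scope classical_set_scope.
Local Open Scope ereal_scope.

Section ereal_sup_inf.
Context {R : realType}.
Implicit Types (S T : set (\bar R)) (x y : \bar R).

Lemma ereal_dense x y : x < y -> exists z, x < z < y.
Proof.
case: x => [a| |]; case: y => [b| |] //=.
- by rewrite lte_fin => ab; exists ((a + b) / 2)%:E; rewrite !lte_fin !midf_lt.
- by move=> _; exists (a + 1)%:E; rewrite lte_fin ltry ltrDl ltr01.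
- by move=> _; exists (b - 1)%:E; rewrite ltNyr lte_fin ltrBlDr ltrDl ltr01.
- by move=> _; exists 0; rewrite ltNy0 lt0y.
Qed.

Lemma ereal_sup_itv {a b S} : S !=set0 -> S `<=` [set x | a <= x <= b] ->
  a <= ereal_sup S <= b.
Proof.
move=> [s Ss] Sab; have /andP[aS _] := Sab _ Ss; apply/andP; split.
  exact: le_trans aS (ereal_sup_ubound Ss).
by apply: ge_ereal_sup => z /Sab /andP[].
Qed.

Lemma ereal_inf_itv {a b S} : S !=set0 -> S `<=` [set x | a <= x <= b] ->
  a <= ereal_inf S <= b.
Proof.
move=> [s Ss] Sab; have /andP[_ sb] := Sab _ Ss; apply/andP; split.
  by apply: le_ereal_inf_tmp => z /Sab /andP[].
exact: le_trans (ereal_inf_lbound Ss) sb.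
Qed.

Lemma ereal_sup_cofinal {S T} : T `<=` S ->
  (forall s, S s -> exists2 t, T t & s <= t) -> ereal_sup S = ereal_sup T.
Proof.
move=> TS cof; apply/eqP; rewrite eq_le (ereal_sup_le TS) andbT.
apply: ge_ereal_sup => s Ss; have [t Tt st] := cof s Ss.
exact: le_trans st (ereal_sup_ubound Tt).
Qed.

Lemma closure_ereal_sup S : S !=set0 -> closure S (ereal_sup S).
Proof.
move=> S0; have clS : closure S `<=` [set y | y <= ereal_sup S].
  rewrite [X in _ `<=` X](closure_id _).1; last exact: closed_ereal_ge_ereal.
  by apply: closureS => y; apply: ereal_sup_ubound.
apply: itv_closed_supremums; first by case: S0 => x Sx; exists x; apply: subset_closure.
  exact: closed_closure.
split; first by move=> y /clS.
by move=> u uS; apply: ge_ereal_sup => y Sy; apply/uS/subset_closure.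
Qed.

Lemma closure_ereal_inf S : S !=set0 -> closure S (ereal_inf S).
Proof.
move=> S0; have clS : closure S `<=` [set y | ereal_inf S <= y].
  rewrite [X in _ `<=` X](closure_id _).1; last exact: closed_ereal_le_ereal.
  by apply: closureS => y; apply: ereal_inf_lbound.
apply: itv_closed_infimums; first by case: S0 => x Sx; exists x; apply: subset_closure.
  exact: closed_closure.
split; first by move=> y /clS.
by move=> u uS; apply: le_ereal_inf_tmp => y Sy; apply/uS/subset_closure.
Qed.

Definition preserves_ereal_sup (f : \bar R -> \bar R) (A : set (\bar R)) :=
  forall S, S !=set0 -> S `<=` A -> f (ereal_sup S) = ereal_sup (f @` S).

Definition preserves_ereal_inf (f : \bar R -> \bar R) (A : set (\bar R)) :=
  forall S, S !=set0 -> S `<=` A -> f (ereal_inf S) = ereal_inf (f @` S).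

Lemma sub_preserves_ereal_sup {f A B} : A `<=` B ->
  preserves_ereal_sup f B -> preserves_ereal_sup f A.
Proof. by move=> AB fB S S0 SA; apply: fB S0 (subset_trans SA AB). Qed.

Lemma sub_preserves_ereal_inf {f A B} : A `<=` B ->
  preserves_ereal_inf f B -> preserves_ereal_inf f A.
Proof. by move=> AB fB S S0 SA; apply: fB S0 (subset_trans SA AB). Qed.

Section continuous_nondecreasing.
Context {f : \bar R -> \bar R} {A : set (\bar R)}.
Hypotheses (f_cont : {within A, continuous f})
  (f_nd : forall u v, A u -> A v -> u <= v -> f u <= f v).

Lemma continuous_nondecreasing_ereal_sup S : S `<=` A -> S !=set0 ->
  A (ereal_sup S) -> f (ereal_sup S) = ereal_sup (f @` S).
Proof.
move=> SA S0 Asup; apply/eqP; rewrite eq_le; apply/andP; split; last first.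
  apply: ge_ereal_sup => _ [s Ss <-].
  by apply: f_nd => //; [exact: SA | exact: ereal_sup_ubound].
rewrite leNgt; apply/negP => supf_lt.
have /(_ [set y | ereal_sup (f @` S) < y]) := (subspace_continuousP A f).1 f_cont _ Asup.
case/(_ (open_ereal_gt' supf_lt))/(@closure_ereal_sup S S0 _) => z [Sz /= zU].
have := zU (SA _ Sz); rewrite ltNge => /negP; apply.
by apply: ereal_sup_ubound; exists z.
Qed.

Lemma continuous_nondecreasing_ereal_inf S : S `<=` A -> S !=set0 ->
  A (ereal_inf S) -> f (ereal_inf S) = ereal_inf (f @` S).
Proof.
move=> SA S0 Ainf; apply/eqP; rewrite eq_le; apply/andP; split.
  apply: le_ereal_inf_tmp => _ [s Ss <-].
  by apply: f_nd => //; [exact: SA | exact: ereal_inf_lbound].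
rewrite leNgt; apply/negP => inff_gt.
have /(_ [set y | y < ereal_inf (f @` S)]) := (subspace_continuousP A f).1 f_cont _ Ainf.
case/(_ (open_ereal_lt' inff_gt))/(@closure_ereal_inf S S0 _) => z [Sz /= zU].
have := zU (SA _ Sz); rewrite ltNge => /negP; apply.
by apply: ereal_inf_lbound; exists z.
Qed.

End continuous_nondecreasing.

Lemma ereal_ivt (g : \bar R -> \bar R) {p q y} : p <= q ->
  preserves_ereal_sup g [set z | p <= z <= q] ->
  preserves_ereal_inf g [set z | p <= z <= q] ->
  g p <= y <= g q -> exists2 w, p <= w <= q & g w = y.
Proof.
move=> pq g_sup g_inf /andP[gpy ygq].
pose Z := [set z | p <= z <= q /\ g z <= y].
have Z0 : Z !=set0 by exists p; rewrite /Z /= lexx pq.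
have ZI : Z `<=` [set z | p <= z <= q] by move=> z [].
pose w := ereal_sup Z.
have wI : p <= w <= q by apply: ereal_sup_itv.
exists w => //; have /andP[pw wq] := wI.
have gwy : g w <= y by rewrite /w g_sup // ; apply: ge_ereal_sup => _ [z [_ gzy] <-].
apply/eqP; rewrite eq_le gwy /=.
have [wq_eq|] := eqVneq w q; first by rewrite wq_eq.
move=> w_neq_q; have wq_lt : w < q by rewrite lt_neqAle w_neq_q.
pose Z' := [set z | w < z <= q].
have Z'q : Z' q by rewrite /Z' /= wq_lt lexx.
have Z'I : Z' `<=` [set z | p <= z <= q].
  by move=> z /andP[/ltW wz zq]; rewrite /= (le_trans pw wz).
have inf_Z' : ereal_inf Z' = w.
  apply/eqP; rewrite eq_le [w <= _]le_ereal_inf_tmp ?andbT; last by move=> z /andP[/ltW].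
  rewrite leNgt; apply/negP => /ereal_dense[z /andP[wz zm]].
  have : Z' z.
    rewrite /Z' /= wz (le_trans (ltW zm)) //.
    exact: ereal_inf_lbound Z'q.
  by move/ereal_inf_lbound; rewrite leNgt zm.
rewrite -inf_Z' g_inf //; last by exists q.
apply: le_ereal_inf_tmp => _ [z Z'z <-].
rewrite leNgt; apply/negP => gzy.
have : Z z by split; [exact: Z'I | exact: ltW].
by move/ereal_sup_ubound; rewrite -/w leNgt; case/andP: Z'z => ->.
Qed.

End ereal_sup_inf.

Section pseudo_multiplication.
Context {R : realType} {op : \bar R -> \bar R -> \bar R} {e : \bar R}.
Hypothesis pm : pseudo_mult op e.
Implicit Types (S : set (\bar R)) (r s t u x y z : \bar R).

Lemma op_ge0 {s t} : 0 <= s -> 0 <= t -> 0 <= op s t.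
Proof. by case: pm => h _; apply: h. Qed.

Lemma opA {r s t} : 0 <= r -> 0 <= s -> 0 <= t -> op (op r s) t = op r (op s t).
Proof. by case: pm => _ [h _]; apply: h. Qed.

Lemma op_continuous :
  {within [set p : \bar R * \bar R | (0 < p.1 < +oo) /\ 0 <= p.2],
    continuous (fun p => op p.1 p.2)}.
Proof. by case: pm => _ [_ [h _]]. Qed.

Lemma op_continuous_l {t} : 0 <= t ->
  {within [set s | 0 < s], continuous (fun s => op s t)}.
Proof. by case: pm => _ [_ [_ [h _]]]; apply: h. Qed.

Lemma le_opl {s s' t} : 0 <= s -> s <= s' -> 0 <= t -> op s t <= op s' t.
Proof. by case: pm => _ [_ [_ [_ [h _]]]]; apply: h. Qed.

Lemma le_opr {s t t'} : 0 <= s -> 0 <= t -> t <= t' -> op s t <= op s t'.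
Proof. by case: pm => _ [_ [_ [_ [_ [h _]]]]]; apply: h. Qed.

Lemma e_ge0 : 0 <= e.
Proof. by case: pm => _ [_ [_ [_ [_ [_ [[h _] _]]]]]]. Qed.

Lemma op_el {t} : 0 <= t -> op e t = t.
Proof. by case: pm => _ [_ [_ [_ [_ [_ [[_ h] _]]]]]]; apply: h. Qed.

Lemma op0l {t} : 0 <= t -> op 0 t = 0.
Proof. by case: pm => _ [_ [_ [_ [_ [_ [_ [_ h]]]]]]] /h[]. Qed.

Lemma op0r {t} : 0 <= t -> op t 0 = 0.
Proof. by case: pm => _ [_ [_ [_ [_ [_ [_ [_ h]]]]]]] /h[]. Qed.

Lemma le_op {s s' t t'} : 0 <= s -> s <= s' -> 0 <= t -> t <= t' ->
  op s t <= op s' t'.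
Proof.
move=> s0 ss' t0 tt'; apply: le_trans (le_opr s0 t0 tt') _.
by apply: le_opl => //; exact: le_trans tt'.
Qed.

Lemma op_continuous_r {s} : 0 < s < +oo ->
  {within [set t | 0 <= t], continuous (op s)}.
Proof.
move=> s_fin; apply/subspace_continuousP => t t0 U Unbhs.
have [[V W] /= [Vs Wt] VW] := (subspace_continuousP _ _).1 op_continuous
  (s, t) (conj s_fin t0) U Unbhs.
rewrite /= nbhs_simpl /=; apply: filterS Wt => t' Wt' t'0.
by apply: (VW (s, t')) => //=; split => //; exact: nbhs_singleton.
Qed.

Lemma e_gt0 : 0 < e.
Proof.
rewrite lt_neqAle e_ge0 andbT; apply/negP => /eqP e0.
by have := op_el lee01; rewrite -e0 op0l ?lee01 // => /eqP; rewrite eq_sym eqe oner_eq0.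
Qed.

Definition unit_itv : set (\bar R) := [set x | 0 <= x <= e].

Lemma unit_itv_ge0 {x} : unit_itv x -> 0 <= x. Proof. by case/andP. Qed.
Lemma unit_itv_le {x} : unit_itv x -> x <= e. Proof. by case/andP. Qed.
Lemma unit_itv0 : unit_itv 0. Proof. by rewrite /unit_itv /= lexx e_ge0. Qed.
Lemma unit_itve : unit_itv e. Proof. by rewrite /unit_itv /= lexx e_ge0. Qed.

Lemma op_unit_itv {s t} : unit_itv s -> unit_itv t -> unit_itv (op s t).
Proof.
move=> /andP[s0 se] /andP[t0 te]; rewrite /unit_itv /= op_ge0 //=.
by rewrite -[X in _ <= X](op_el e_ge0) le_op.
Qed.

Lemma op_le_r {s t} : unit_itv s -> 0 <= t -> op s t <= t.
Proof. by move=> /andP[s0 se] t0; rewrite -[X in _ <= X](op_el t0) le_opl. Qed.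

Lemma commutative_non_degenerate :
  (forall s t, unit_itv s -> unit_itv t -> op s t = op t s) ->
  non_degenerate op e.
Proof.
move=> opC; apply/eqP; rewrite eq_le; apply/andP; split; last first.
  by apply: le_ereal_inf_tmp => _ [s /ltW s0 <-]; exact: op_ge0 s0 e_ge0.
rewrite leNgt; apply/negP => O_gt0.
have [z /andP[z0 zm]] : exists z, 0 < z < Order.min (O_inf op e) e.
  by apply: ereal_dense; rewrite lt_min O_gt0 e_gt0.
move: zm; rewrite lt_min => /andP[zO ze].
have zI : unit_itv z by rewrite /unit_itv /= ltW // ltW.
have : O_inf op e <= op z e by apply: ereal_inf_lbound; exists z.
by rewrite opC ?op_el ?(ltW z0) ?leNgt ?zO //; exact: unit_itve.
Qed.

Lemma unit_itv_cases {s} : unit_itv s ->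
  [\/ s = 0, s = +oo /\ e = +oo | 0 < s < +oo].
Proof.
move=> /andP[s0 se]; have [->|s_neq0] := eqVneq s 0; first exact: Or31.
have [s_oo|s_neqoo] := eqVneq s +oo.
  by apply: Or32; split => //; apply/eqP; rewrite eq_le leey -s_oo.
by apply: Or33; rewrite lt_neqAle eq_sym s_neq0 s0 ltey.
Qed.

Lemma image_op0l S : S !=set0 -> S `<=` unit_itv -> op 0 @` S = [set 0].
Proof.
move=> S0 SI; transitivity [set (0 : \bar R) | _ in S].
  by apply: eq_imagel => s /SI /unit_itv_ge0 /op0l.
by move/set0P/negPf: S0 => S0; rewrite set_cst S0.
Qed.

Lemma image_op_el S : S `<=` unit_itv -> op e @` S = S.
Proof.
by move=> SI; rewrite -[RHS]image_id; apply: eq_imagel => s /SI /unit_itv_ge0 /op_el.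
Qed.

Lemma op_sup_r {s} : unit_itv s -> preserves_ereal_sup (op s) unit_itv.
Proof.
move=> sI S S0 SI; have supI : unit_itv (ereal_sup S) := ereal_sup_itv S0 SI.
case: (unit_itv_cases sI) => [->|[-> <-]|s_fin].
- by rewrite image_op0l // ereal_sup1 op0l // unit_itv_ge0.
- by rewrite image_op_el // op_el // unit_itv_ge0.
apply: (continuous_nondecreasing_ereal_sup (op_continuous_r s_fin)) => //.
- by move=> u v u0 v0; apply: le_opr => //; case/andP: s_fin => /ltW.
- by move=> z /SI /unit_itv_ge0.
- exact: unit_itv_ge0.
Qed.

Lemma op_inf_r {s} : unit_itv s -> preserves_ereal_inf (op s) unit_itv.
Proof.
move=> sI S S0 SI; have infI : unit_itv (ereal_inf S) := ereal_inf_itv S0 SI.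
case: (unit_itv_cases sI) => [->|[-> <-]|s_fin].
- by rewrite image_op0l // ereal_inf1 op0l // unit_itv_ge0.
- by rewrite image_op_el // op_el // unit_itv_ge0.
apply: (continuous_nondecreasing_ereal_inf (op_continuous_r s_fin)) => //.
- by move=> u v u0 v0; apply: le_opr => //; case/andP: s_fin => /ltW.
- by move=> z /SI /unit_itv_ge0.
- exact: unit_itv_ge0.
Qed.

Lemma op_sup_l {t} : unit_itv t -> preserves_ereal_sup (op^~ t) unit_itv.
Proof.
move=> tI S S0 SI; have t0 := unit_itv_ge0 tI.
have [[s1 Ss1 s1_gt0]|S_npos] := pselect (exists2 s, S s & 0 < s); last first.
  have S_eq0 s : S s -> s = 0.
    move=> Ss; apply/eqP; rewrite eq_le (unit_itv_ge0 (SI _ Ss)) andbT leNgt.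
    by apply/negP => s_gt0; apply: S_npos; exists s.
  have -> : S = [set 0].
    apply/seteqP; split => [s /S_eq0 //|_ ->].
    by case: S0 => s Ss; rewrite -(S_eq0 _ Ss).
  by rewrite image_set1 !ereal_sup1.
(* Continuity in [s] is only known on (0, oo]; zeros of [S] affect neither sup. *)
pose T := S `&` [set s | 0 < s].
have cofT s : S s -> exists2 u, T u & s <= u.
  move=> Ss; have [s_gt0|] := ltP 0 s; first by exists s.
  by move=> s_le0; exists s1 => //; apply: le_trans s_le0 (ltW s1_gt0).
rewrite (ereal_sup_cofinal (@subIsetl _ S _) cofT).
rewrite (ereal_sup_cofinal (image_subset (op^~ t) (@subIsetl _ S [set s | 0 < s]))); last first.
  move=> _ [s Ss <-]; have [u Tu su] := cofT s Ss.
  by exists (op u t); [exists u | apply: le_opl => //; apply/unit_itv_ge0/SI].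
apply: (continuous_nondecreasing_ereal_sup (op_continuous_l t0)).
- by move=> u v /ltW u0 _ uv; apply: le_opl.
- by move=> s [].
- by exists s1.
- exact: lt_le_trans s1_gt0 (ereal_sup_ubound (conj Ss1 s1_gt0)).
Qed.

Lemma sub_unit_itv {a b} : 0 <= a -> b <= e -> [set z | a <= z <= b] `<=` unit_itv.
Proof.
by move=> a0 be z /andP[az zb]; rewrite /unit_itv /= (le_trans a0 az) (le_trans zb be).
Qed.

Lemma op_inf_l_gt0 {t S} : 0 <= t -> S !=set0 -> 0 < ereal_inf S ->
  op (ereal_inf S) t = ereal_inf ((op^~ t) @` S).
Proof.
move=> t0 S0 inf_gt0; apply: (continuous_nondecreasing_ereal_inf (op_continuous_l t0)) => //.
- by move=> u v /ltW u0 _ uv; apply: le_opl.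
- by move=> s Ss; apply: lt_le_trans inf_gt0 (ereal_inf_lbound Ss).
Qed.

(* [opX w n] is the (n+1)-st power of [w]. *)
Fixpoint opX w n := if n is k.+1 then op (opX w k) w else w.

Lemma opX_unit_itv {w} n : unit_itv w -> unit_itv (opX w n).
Proof. by move=> wI; elim: n => //= n IH; apply: op_unit_itv. Qed.

Lemma le_opX {v w} n : unit_itv v -> unit_itv w -> v <= w -> opX v n <= opX w n.
Proof.
move=> vI wI vw; elim: n => //= n IH.
by apply: le_op => //; apply: unit_itv_ge0 => //; apply: opX_unit_itv.
Qed.

Lemma opXD {w} k n : unit_itv w -> op (opX w k) (opX w n) = opX w (k + n).+1.
Proof.
move=> wI; elim: n => [|n IH] /=; first by rewrite addn0.
by rewrite -opA ?IH ?addnS //; apply: unit_itv_ge0 => //; apply: opX_unit_itv.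
Qed.

Lemma opX_e n : opX e n = e.
Proof. by elim: n => //= n ->; rewrite op_el // e_ge0. Qed.

Section non_degenerate.
Hypothesis nd : non_degenerate op e.

Lemma op_e_r {y} : unit_itv y -> op y e = y.
Proof.
move=> yI; have [->|y_neq0] := eqVneq y 0; first exact: op0l e_ge0.
have y_gt0 : 0 < y by rewrite lt_neqAle eq_sym y_neq0 unit_itv_ge0.
have [_ [z /= z_gt0 <-] zy] : exists2 u, [set op s e | s in [set s | 0 < s]] u & u < y.
  by apply: ereal_inf_lt; move: nd; rewrite /non_degenerate /O_inf => ->.
have ze : z <= e.
  rewrite leNgt; apply/negP => ez.
  have := le_opl e_ge0 (ltW ez) e_ge0; rewrite op_el ?e_ge0 // => /le_lt_trans/(_ zy).
  by rewrite ltNge unit_itv_le.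
have sup_e : preserves_ereal_sup (op^~ e) [set u | z <= u <= e].
  exact: sub_preserves_ereal_sup (sub_unit_itv (ltW z_gt0) (lexx e)) (op_sup_l unit_itve).
have inf_e : preserves_ereal_inf (op^~ e) [set u | z <= u <= e].
  move=> S S0 SI; apply: op_inf_l_gt0 e_ge0 S0 (lt_le_trans z_gt0 _).
  by apply: le_ereal_inf_tmp => u /SI /andP[].
have y_between : op z e <= y <= op e e by rewrite (ltW zy) op_el ?e_ge0 ?unit_itv_le.
have [w /andP[zw _] <-] := ereal_ivt (op^~ e) ze sup_e inf_e y_between.
by rewrite /= opA ?op_el ?e_ge0 // (le_trans (ltW z_gt0) zw).
Qed.

Lemma op_le_l {s t} : unit_itv s -> unit_itv t -> op s t <= s.
Proof.
move=> sI /andP[t0 te]; rewrite -[X in _ <= X](op_e_r sI).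
by apply: le_opr => //; exact: unit_itv_ge0.
Qed.

Lemma op_inf_l {t} : unit_itv t -> preserves_ereal_inf (op^~ t) unit_itv.
Proof.
move=> tI S S0 SI; have t0 := unit_itv_ge0 tI.
have [inf_gt0|inf_le0] := ltP 0 (ereal_inf S); first exact: op_inf_l_gt0.
have inf0 : ereal_inf S = 0.
  by apply/eqP; rewrite eq_le inf_le0 (unit_itv_ge0 (ereal_inf_itv S0 SI)).
rewrite inf0 op0l //; apply/eqP; rewrite eq_le; apply/andP; split.
  by apply: le_ereal_inf_tmp => _ [s /SI/unit_itv_ge0 s0 <-]; apply: op_ge0.
rewrite -inf0; apply: le_ereal_inf_tmp => s Ss.
by apply: le_trans (op_le_l (SI _ Ss) tI); apply: ereal_inf_lbound; exists s.
Qed.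

Lemma opX_le {w} n : unit_itv w -> opX w n <= w.
Proof.
move=> wI; elim: n => //= n IH.
exact: le_trans (op_le_l (opX_unit_itv n wI) wI) IH.
Qed.

Lemma opX_sup n : preserves_ereal_sup (opX^~ n) unit_itv.
Proof.
move=> S S0 SI; have supI := ereal_sup_itv S0 SI.
elim: n => [|n IH] /=; first by rewrite image_id.
apply/eqP; rewrite eq_le; apply/andP; split; last first.
  apply: ge_ereal_sup => _ [s Ss <-].
  exact: (le_opX n.+1 (SI _ Ss) supI (ereal_sup_ubound Ss)).
have SnI : (opX^~ n) @` S `<=` unit_itv by move=> _ [s /SI sI <-]; apply: opX_unit_itv.
rewrite (op_sup_r (opX_unit_itv n supI)) //; apply: ge_ereal_sup => _ [s' Ss' <-].
rewrite IH (op_sup_l (SI _ Ss')) //; last exact: image_nonempty.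
apply: ge_ereal_sup => _ [_ [s Ss <-] <-].
have [m Sm [sm s'm]] : exists2 m, S m & s <= m /\ s' <= m.
  by have [ss'|/ltW s's] := leP s s'; [exists s' | exists s].
apply: le_ereal_sup_tmp; exists (opX m n.+1); first by exists m.
have [sI mI] := (SI _ Ss, SI _ Sm).
apply: le_op (le_opX n sI mI sm) _ s'm; apply: unit_itv_ge0; last exact: SI.
exact: opX_unit_itv.
Qed.

Lemma opX_inf n : preserves_ereal_inf (opX^~ n) unit_itv.
Proof.
move=> S S0 SI; have infI := ereal_inf_itv S0 SI.
elim: n => [|n IH] /=; first by rewrite image_id.
apply/eqP; rewrite eq_le; apply/andP; split.
  apply: le_ereal_inf_tmp => _ [s Ss <-].
  exact: (le_opX n.+1 infI (SI _ Ss) (ereal_inf_lbound Ss)).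
have SnI : (opX^~ n) @` S `<=` unit_itv by move=> _ [s /SI sI <-]; apply: opX_unit_itv.
rewrite (op_inf_r (opX_unit_itv n infI)) //; apply: le_ereal_inf_tmp => _ [s' Ss' <-].
rewrite IH (op_inf_l (SI _ Ss')) //; last exact: image_nonempty.
apply: le_ereal_inf_tmp => _ [_ [s Ss <-] <-].
have [m Sm [ms ms']] : exists2 m, S m & m <= s /\ m <= s'.
  by have [ss'|/ltW s's] := leP s s'; [exists s | exists s'].
apply: ge_ereal_inf; exists (opX m n.+1); first by exists m.
have [sI mI] := (SI _ Ss, SI _ Sm).
apply: le_op (le_opX n mI sI ms) _ ms'; apply: unit_itv_ge0; last exact: SI.
exact: opX_unit_itv.
Qed.

Lemma opX_root x n : unit_itv x -> exists2 w, unit_itv w & opX w n = x.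
Proof.
move=> xI; have sub := sub_unit_itv (unit_itv_ge0 xI) (lexx e).
have x_between : opX x n <= x <= opX e n by rewrite opX_le // opX_e unit_itv_le.
have [w wxe <-] := ereal_ivt (opX^~ n) (unit_itv_le xI)
  (sub_preserves_ereal_sup sub (opX_sup n)) (sub_preserves_ereal_inf sub (opX_inf n))
  x_between.
by exists w => //; apply: sub.
Qed.

Section idempotent.
Context {p : \bar R} (pI : unit_itv p) (pp : op p p = p).

Lemma idem_absorb_le {u} : u <= p -> unit_itv u -> op p u = u /\ op u p = u.
Proof.
move=> up uI; have [p0 u0] := (unit_itv_ge0 pI, unit_itv_ge0 uI).
have sub := sub_unit_itv (lexx 0) (unit_itv_le pI).
have u_betweenl : op p 0 <= u <= op p p by rewrite op0r // pp u0 up.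
have u_betweenr : op 0 p <= u <= op p p by rewrite op0l // pp u0 up.
have [w /andP[w0 _] wu] := ereal_ivt (op p) p0 (sub_preserves_ereal_sup sub (op_sup_r pI))
  (sub_preserves_ereal_inf sub (op_inf_r pI)) u_betweenl.
have [v /andP[v0 _] vu] := ereal_ivt (op^~ p) p0 (sub_preserves_ereal_sup sub (op_sup_l pI))
  (sub_preserves_ereal_inf sub (op_inf_l pI)) u_betweenr.
by split; [rewrite -wu -opA ?pp | rewrite -vu opA ?pp].
Qed.

Lemma idem_absorb_ge {u} : p <= u -> unit_itv u -> op p u = p /\ op u p = p.
Proof.
move=> pu uI; have p0 := unit_itv_ge0 pI.
split; apply/eqP; rewrite eq_le; apply/andP; split.
- exact: op_le_l.
- by rewrite -[X in X <= _]pp; apply: le_opr.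
- by rewrite -[X in _ <= X](op_el p0) le_opl ?unit_itv_ge0 ?unit_itv_le.
- by rewrite -[X in X <= _]pp; apply: le_opl.
Qed.

Lemma idem_commute {u} : unit_itv u -> op p u = op u p.
Proof.
move=> uI; have [up|/ltW pu] := leP u p.
  by have [-> ->] := idem_absorb_le up uI.
by have [-> ->] := idem_absorb_ge pu uI.
Qed.

Lemma commute_across_idem {x y} : unit_itv x -> unit_itv y -> x <= p -> p <= y ->
  op x y = op y x.
Proof.
move=> xI yI xp py; have [px xp'] := idem_absorb_le xp xI.
have [py' yp] := idem_absorb_ge py yI.
have [x0 y0] := (unit_itv_ge0 xI, unit_itv_ge0 yI); have p0 := unit_itv_ge0 pI.
transitivity x; first by rewrite -[in LHS]xp' opA // py' xp'.
by rewrite -[in RHS]px -opA // yp px.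
Qed.

End idempotent.

Lemma ereal_inf_opX_idem {c} : unit_itv c ->
  let q := ereal_inf (range (opX c)) in op q q = q.
Proof.
move=> cI q; have cXI : range (opX c) `<=` unit_itv.
  by move=> _ [k _ <-]; exact: opX_unit_itv.
have cX0 : range (opX c) !=set0 by exists c, 0%N.
have qI : unit_itv q := ereal_inf_itv cX0 cXI.
apply/eqP; rewrite eq_le op_le_l //= {2}/q (op_inf_l qI) //.
apply: le_ereal_inf_tmp => _ [_ [k _ <-] <-].
rewrite /q (op_inf_r (opX_unit_itv k cI)) //.
apply: le_ereal_inf_tmp => _ [_ [j _ <-] <-].
by rewrite opXD //; apply: ereal_inf_lbound; exists (k + j).+1.
Qed.

Definition centralizer x : set (\bar R) := [set z | unit_itv z /\ op x z = op z x].

Lemma centralizer_sup {x S} : unit_itv x -> S !=set0 -> S `<=` centralizer x ->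
  centralizer x (ereal_sup S).
Proof.
move=> xI S0 SD; have SI : S `<=` unit_itv by move=> z /SD[].
split; first exact: ereal_sup_itv.
by rewrite op_sup_r // op_sup_l //; congr ereal_sup; apply: eq_imagel => z /SD[].
Qed.

Lemma centralizer_inf {x S} : unit_itv x -> S !=set0 -> S `<=` centralizer x ->
  centralizer x (ereal_inf S).
Proof.
move=> xI S0 SD; have SI : S `<=` unit_itv by move=> z /SD[].
split; first exact: ereal_inf_itv.
by rewrite op_inf_r // op_inf_l //; congr ereal_inf; apply: eq_imagel => z /SD[].
Qed.

Lemma centralizer_opX {w} n k : unit_itv w -> centralizer (opX w n) (opX w k).
Proof. by move=> wI; split; [exact: opX_unit_itv | rewrite !opXD // addnC]. Qed.

Lemma centralizer_gap {x y} : unit_itv x -> unit_itv y -> ~ centralizer x y ->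
  exists g h, [/\ centralizer x g, centralizer x h, g <= y, y < h &
    forall z, centralizer x z -> g < z -> h <= z].
Proof.
move=> xI yI Dy; have x0 := unit_itv_ge0 xI.
pose Sg := centralizer x `&` [set z | z <= y].
pose Sh := centralizer x `&` [set z | y <= z].
have Sg0 : Sg !=set0.
  by exists 0; split; [split; [exact: unit_itv0 | rewrite op0l ?op0r] | exact: unit_itv_ge0].
have Sh0 : Sh !=set0.
  by exists e; split; [split; [exact: unit_itve | rewrite op_el ?op_e_r] | exact: unit_itv_le].
have Dh : centralizer x (ereal_inf Sh) by apply: centralizer_inf => // z [].
exists (ereal_sup Sg), (ereal_inf Sh); split => //.
- by apply: centralizer_sup => // z [].
- by apply: ge_ereal_sup => z [].
- rewrite lt_neqAle le_ereal_inf_tmp ?andbT; last by move=> z [].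
  by apply/eqP => yh; apply: Dy; rewrite yh.
move=> z Dz gz; have [zy|/ltW yz] := leP z y.
  by move: gz; rewrite ltNge ereal_sup_ubound.
exact: ereal_inf_lbound.
Qed.

Lemma gap_le_opX {g h w} n : unit_itv w -> unit_itv h ->
  (forall z, centralizer (opX w n) z -> g < z -> h <= z) -> g < op h w ->
  h <= opX w n.
Proof.
move=> wI hI gap ghw; have [w0 h0] := (unit_itv_ge0 wI, unit_itv_ge0 hI).
suff h_le k : h <= opX w k by [].
elim: k => [|k IH]; apply: gap (centralizer_opX _ _ wI) _.
  exact: lt_le_trans ghw (op_le_r hI w0).
exact: lt_le_trans ghw (le_opl h0 IH w0).
Qed.

Lemma commute_le {x y} : unit_itv x -> unit_itv y -> x <= y -> op x y = op y x.
Proof.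
move=> xI yI xy; apply: contrapT => xy_neq.
have /choice[w wP] n : exists w, unit_itv w /\ opX w n = x.
  by have [w ? ?] := opX_root x n xI; exists w.
have wI n : unit_itv (w n) by case: (wP n).
pose c := ereal_sup (range w).
have w0 : range w !=set0 by exists (w 0%N), 0%N.
have cI : unit_itv c by apply: ereal_sup_itv => // _ [n _ <-]; exact: wI.
pose q := ereal_inf (range (opX c)).
have qq : op q q = q := ereal_inf_opX_idem cI.
have qI : unit_itv q.
  by apply: ereal_inf_itv; [exists c, 0%N | move=> _ [k _ <-]; exact: opX_unit_itv].
have xq : x <= q.
  apply: le_ereal_inf_tmp => _ [k _ <-]; rewrite -(proj2 (wP k)).
  by apply: le_opX => //; apply: ereal_sup_ubound; exists k.
have yq : y < q.
  by rewrite ltNge; apply/negP => /(commute_across_idem qI qq xI yI xq).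
have [g [h [_ [hI _] gy yh gap]]] := centralizer_gap xI yI (fun Dy => xy_neq Dy.2).
have hq : h <= q by apply: gap; [split => //; exact/esym/idem_commute | exact: le_lt_trans yq].
have : g < op h c.
  apply: le_lt_trans gy (lt_le_trans yh _).
  rewrite -[X in X <= _](proj2 (idem_absorb_le qI qq hq hI)).
  apply: le_opr; [exact: unit_itv_ge0 | exact: unit_itv_ge0 |].
  by apply: ereal_inf_lbound; exists 0%N.
rewrite op_sup_r //; last by move=> _ [n _ <-]; exact: wI.
case/ereal_sup_gt => _ [_ [n _ <-] <-] ghw.
have := gap_le_opX n (wI n) hI _ ghw; rewrite (proj2 (wP n)) => /(_ gap) hx.
by have := lt_le_trans yh (le_trans hx xy); rewrite ltxx.
Qed.

End non_degenerate.
End pseudo_multiplication.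

Theorem lemma2p7 (R : realType) (op : \bar R -> \bar R -> \bar R) (e : \bar R) :
  pseudo_mult op e ->
  (non_degenerate op e <->
   (forall s t, 0 <= s <= e -> 0 <= t <= e -> op s t = op t s)).
Proof.
move=> pm; split; first last.
  exact: commutative_non_degenerate pm.
move=> nd s t sI tI; have [st|/ltW ts] := leP s t.
  exact: (commute_le pm nd sI tI st).
exact/esym/(commute_le pm nd tI sI ts).
Qed.
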